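(* Let $(x^k,\lambda^k)_{k\ge0}$ be generated by the proximal ADMM applied to (P). Suppose Assumption (A2) holds on a compact set $S$ with constants $M_f,L_f,C_\varphi,M_\varphi,L_\varphi$, and that $x^{k+1}\in S$ for some $k\ge0$. Then for every $i=0,\dots,n-1$, $$\|\lambda_i^{k+1}\|\le\frac{1-M_\varphi^{n-i}}{1-M_\varphi}M_f+\sum_{j=i}^{n-2}\rho_{j+1}M_\varphi^{j+1-i}\|x_{j+2}^{k+1}-x_{j+2}^k\|+\sum_{j=i}^{n-1}\frac{M_\varphi^{j-i}}{\eta_{j+1}}\|x_{j+1}^{k+1}-x_{j+1}^k\|,$$ equivalently $$\|\lambda_i^{k+1}\|\le\frac{1-M_\varphi^{n-i}}{1-M_\varphi}M_f+\sum_{j=i}^{n-1}B_{j,i}\|x_{j+1}^{k+1}-x_{j+1}^k\|,$$ where $B_{j,i}=\rho_jM_\varphi^{j-i}+\frac{M_\varphi^{j-i}}{\eta_{j+1}}$ for $j>i$ and $B_{i,i}=\frac{1}{\eta_{i+1}}$.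
   Context: Let $n,d\ge1$, and let $f_0,\dots,f_n:\mathbb{R}^d\to\mathbb{R}$ and $\varphi:\mathbb{R}^d\to\mathbb{R}^d$ be continuously differentiable; $\nabla\varphi$ denotes the Jacobian matrix and $\|\cdot\|$ the Euclidean norm / induced matrix 2-norm. Problem (P): minimize $\sum_{i=0}^n f_i(x_i)$ over $x=(x_0,\dots,x_n)\in(\mathbb{R}^d)^{n+1}$ subject to $x_{j+1}=\varphi(x_j)$, $j=0,\dots,n-1$. For penalty parameters $\rho_0,\dots,\rho_{n-1}>0$ and $\lambda=(\lambda_0,\dots,\lambda_{n-1})\in(\mathbb{R}^d)^n$, the augmented Lagrangian is $L_\rho(x,\lambda)=\sum_{i=0}^n f_i(x_i)+\sum_{i=0}^{n-1}\big(\langle\lambda_i,x_{i+1}-\varphi(x_i)\rangle+\frac{\rho_i}{2}\|x_{i+1}-\varphi(x_i)\|^2\big)$. Proximal ADMM: given $\eta_0,\dots,\eta_n>0$ and an initial point $(x^0,\lambda^0)$, for $k=0,1,\dots$, for $i=0,1,\dots,n$ in this order, $x_i^{k+1}$ is a (global) minimizer over $x_i$ of $L_\rho(x_0^{k+1},\dots,x_{i-1}^{k+1},x_i,x_{i+1}^k,\dots,x_n^k,\lambda^k)+\frac{1}{2\eta_i}\|x_i-x_i^k\|^2$ (assumed to exist), then $\lambda_j^{k+1}=\lambda_j^k+\rho_j(x_{j+1}^{k+1}-\varphi(x_j^{k+1}))$, $j=0,\dots,n-1$. Assumption (A2) on a compact set $S\subset(\mathbb{R}^d)^{n+1}$: there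 are constants $M_f,L_f,C_\varphi,M_\varphi,L_\varphi>0$ such that for all $x=(x_0,\dots,x_n),y=(y_0,\dots,y_n)\in S$ and all $i=0,\dots,n$: $\|\nabla f_i(x_i)\|\le M_f$, $\|\nabla f_i(x_i)-\nabla f_i(y_i)\|\le L_f\|x_i-y_i\|$, $\|\varphi(x_i)\|\le C_\varphi$, $\|\nabla\varphi(x_i)\|\le M_\varphi$, $\|\nabla\varphi(x_i)-\nabla\varphi(y_i)\|\le L_\varphi\|x_i-y_i\|$. Quotients of the form $\frac{M_\varphi^a-M_\varphi^b}{1-M_\varphi}$ ($a\le b$) denote $\sum_{l=a}^{b-1}M_\varphi^l$ (in particular when $M_\varphi=1$). *)

From HB Require Import structures.
From mathcomp Require Import all_boot all_order all_algebra.
From mathcomp Require Import all_classical all_reals all_analysis.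
Set Implicit Arguments. Unset Strict Implicit. Unset Printing Implicit Defensive.
Import Order.TTheory GRing.Theory Num.Theory.
Import numFieldNormedType.Exports.
Local Open Scope classical_set_scope.
Local Open Scope ring_scope.

Section Defs.
Variable R : realType.

Definition dotp d (u v : 'rV[R]_d) : R := \sum_(j < d) u 0 j * v 0 j.
Definition enorm d (v : 'rV[R]_d) : R := Num.sqrt (\sum_(j < d) v 0 j ^+ 2).

(* induced matrix 2-norm: sup of |A v| over the Euclidean unit ball
   (a vector v is a row vector, A v is (v *m A^T)) *)
Definition mxnorm2 d (A : 'M[R]_d) : R :=
  sup [set enorm (v *m A^T) | v in [set v : 'rV[R]_d | enorm v <= 1]].

Definition grad d (f : 'rV[R]_d -> R) (x : 'rV[R]_d) : 'rV[R]_d :=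
  \row_(j < d) ('d f x) (delta_mx 0 j).

(* Jacobian matrix in the usual convention (Jac f x) a b = d f_a / d x_b;
   mathcomp's 'J f x is its transpose (acting on row vectors). *)
Definition Jac d (f : 'rV[R]_d -> 'rV[R]_d) (x : 'rV[R]_d) : 'M[R]_d :=
  ('J f x)^T.

Definition C1_scalar d (f : 'rV[R]_d -> R) : Prop :=
  (forall x, differentiable f x) /\ continuous (grad f).
Definition C1_map d (f : 'rV[R]_d -> 'rV[R]_d) : Prop :=
  (forall x, differentiable f x) /\ continuous (Jac f).

(* the tuple (x_0,...,x_n) in (R^d)^{n+1}, stored as an (n+1) x d matrix *)
Definition tup n d (x : nat -> 'rV[R]_d) : 'M[R]_(n.+1, d) :=
  \matrix_(i < n.+1, j < d) x i 0 j.

Definition A2 n d (f : nat -> 'rV[R]_d -> R) (phi : 'rV[R]_d -> 'rV[R]_d)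
  (S : set 'M[R]_(n.+1, d)) (Mf Lf Cphi Mphi Lphi : R) : Prop :=
  0 < Mf /\ 0 < Lf /\ 0 < Cphi /\ 0 < Mphi /\ 0 < Lphi /\
  forall X Y, S X -> S Y -> forall i : 'I_n.+1,
    [/\ enorm (grad (f i) (row i X)) <= Mf,
        enorm (grad (f i) (row i X) - grad (f i) (row i Y))
          <= Lf * enorm (row i X - row i Y),
        enorm (phi (row i X)) <= Cphi,
        mxnorm2 (Jac phi (row i X)) <= Mphi &
        mxnorm2 (Jac phi (row i X) - Jac phi (row i Y))
          <= Lphi * enorm (row i X - row i Y)].

Definition auglag n d (f : nat -> 'rV[R]_d -> R) (phi : 'rV[R]_d -> 'rV[R]_d)
  (rho : nat -> R) (x lam : nat -> 'rV[R]_d) : R :=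
  \sum_(0 <= i < n.+1) f i (x i)
  + \sum_(0 <= i < n) (dotp (lam i) (x i.+1 - phi (x i))
                       + rho i / 2 * enorm (x i.+1 - phi (x i)) ^+ 2).

Definition gs_point d (xnew xold : nat -> 'rV[R]_d) (i : nat) (y : 'rV[R]_d)
  : nat -> 'rV[R]_d :=
  fun j => if (j < i)%N then xnew j else if j == i then y else xold j.

Definition prox_admm n d (f : nat -> 'rV[R]_d -> R) (phi : 'rV[R]_d -> 'rV[R]_d)
  (rho eta : nat -> R) (x lam : nat -> nat -> 'rV[R]_d) : Prop :=
  (forall k i, (i <= n)%N -> forall y : 'rV[R]_d,
     auglag n f phi rho (gs_point (x k.+1) (x k) i (x k.+1 i)) (lam k)
       + 1 / (2 * eta i) * enorm (x k.+1 i - x k i) ^+ 2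
     <= auglag n f phi rho (gs_point (x k.+1) (x k) i y) (lam k)
       + 1 / (2 * eta i) * enorm (y - x k i) ^+ 2) /\
  (forall k j, (j < n)%N ->
     lam k.+1 j = lam k j + rho j *: (x k.+1 j.+1 - phi (x k.+1 j))).

End Defs.

(* At the minimiser x_(i+1)^(k+1) of the x_(i+1)-subproblem, the derivative of the
   subproblem objective in the direction -lambda_i^(k+1) is nonnegative.  Through the
   updates of lambda_i and lambda_(i+1) this reads, with dx_j = x_j^(k+1) - x_j^k and
   J the Jacobian of phi at x_(i+1)^(k+1),
     |lambda_i^(k+1)|^2 <= - <grad f_(i+1), lambda_i^(k+1)> - <dx_(i+1), lambda_i^(k+1)> / eta_(i+1)
                           + <lambda_(i+1)^(k+1) - rho_(i+1) dx_(i+2), J lambda_i^(k+1)>,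
   and Cauchy-Schwarz with (A2) gives the backward recursion
     |lambda_i^(k+1)| <= M_f + |dx_(i+1)| / eta_(i+1) + M_phi (|lambda_(i+1)^(k+1)| + rho_(i+1) |dx_(i+2)|),
   whose unrolling from i = n-1 is the bound. *)

From HB Require Import structures.
From mathcomp Require Import all_boot all_order all_algebra.
From mathcomp Require Import all_classical all_reals all_analysis.
From mathcomp Require Import ring lra.
Import Order.TTheory GRing.Theory Num.Theory.
Import numFieldNormedType.Exports.
Local Open Scope classical_set_scope.
Local Open Scope ring_scope.

Set Implicit Arguments. Unset Strict Implicit. Unset Printing Implicit Defensive.

Section EuclideanSpace.
Variables (R : realType) (d : nat).
Implicit Types (u v w : 'rV[R]_d) (c : R).

Lemma dotpC u v : dotp u v = dotp v u.
Proof. by apply: eq_bigr => j _; rewrite mulrC. Qed.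

Lemma dotpDl u v w : dotp (u + v) w = dotp u w + dotp v w.
Proof. by rewrite /dotp -big_split; apply: eq_bigr => j _; rewrite mxE mulrDl. Qed.

Lemma dotpZl c u v : dotp (c *: u) v = c * dotp u v.
Proof. by rewrite /dotp mulr_sumr; apply: eq_bigr => j _; rewrite mxE mulrA. Qed.

Lemma dotp0l u : dotp 0 u = 0.
Proof. by rewrite -(scale0r 0) dotpZl mul0r. Qed.

Lemma dotpNl u v : dotp (- u) v = - dotp u v.
Proof. by rewrite -scaleN1r dotpZl mulN1r. Qed.

Lemma dotpNr u v : dotp u (- v) = - dotp u v.
Proof. by rewrite dotpC dotpNl dotpC. Qed.

Lemma dotpDr u v w : dotp u (v + w) = dotp u v + dotp u w.
Proof. by rewrite dotpC dotpDl !(dotpC u). Qed.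

Lemma dotpZr c u v : dotp u (c *: v) = c * dotp u v.
Proof. by rewrite dotpC dotpZl dotpC. Qed.

Lemma enorm_sqr u : enorm u ^+ 2 = dotp u u.
Proof.
rewrite sqr_sqrtr; last by apply: sumr_ge0 => j _; exact: sqr_ge0.
by apply: eq_bigr => j _; rewrite expr2.
Qed.

Lemma enorm_ge0 u : 0 <= enorm u.
Proof. exact: sqrtr_ge0. Qed.

Lemma enorm_eq0 u : enorm u = 0 -> u = 0.
Proof.
have sq_ge0 j : 0 <= u 0 j ^+ 2 by exact: sqr_ge0.
move=> u0; have : \sum_(j < d) u 0 j ^+ 2 = 0.
  by rewrite -(sqr_sqrtr (sumr_ge0 _ (fun j _ => sq_ge0 j))) -/(enorm u) u0 expr0n.
move=> /psumr_eq0P s0; apply/rowP => j; rewrite mxE.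
by apply/eqP; rewrite -sqrf_eq0 s0.
Qed.

Lemma enormN u : enorm (- u) = enorm u.
Proof. by rewrite /enorm; congr Num.sqrt; apply: eq_bigr => j _; rewrite mxE sqrrN. Qed.

Lemma enormZ c u : enorm (c *: u) = `|c| * enorm u.
Proof.
rewrite /enorm -sqrtr_sqr -sqrtrM ?sqr_ge0 // mulr_sumr.
by congr Num.sqrt; apply: eq_bigr => j _; rewrite mxE exprMn.
Qed.

Lemma dotp_le_enorm u v : dotp u v <= enorm u * enorm v.
Proof.
have [a0 | a_neq0] := eqVneq (enorm u) 0.
  by rewrite (enorm_eq0 a0) dotp0l mulr_ge0 ?enorm_ge0.
have [b0 | b_neq0] := eqVneq (enorm v) 0.
  by rewrite (enorm_eq0 b0) dotpC dotp0l mulr_ge0 ?enorm_ge0.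
set a := enorm u; set b := enorm v.
have ab_gt0 : 0 < a * b by rewrite mulr_gt0 // lt_def ?a_neq0 ?b_neq0 enorm_ge0.
(* [0 <= |b u - a v|^2 = 2 a b (a b - <u, v>)] *)
have := sqr_ge0 (enorm (b *: u - a *: v)).
rewrite enorm_sqr !(dotpDl, dotpDr, dotpNl, dotpNr, dotpZl, dotpZr) (dotpC v u).
rewrite -!enorm_sqr -/a -/b.
move=> h; rewrite -(ler_pM2l ab_gt0); nra.
Qed.

Lemma enormD u v : enorm (u + v) <= enorm u + enorm v.
Proof.
rewrite -ler_sqr ?nnegrE ?addr_ge0 ?enorm_ge0 //.
rewrite enorm_sqr dotpDl !dotpDr (dotpC v u) sqrrD -!enorm_sqr.
by have := dotp_le_enorm u v; lra.
Qed.

Lemma coord_le_enorm u j : `|u 0 j| <= enorm u.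
Proof.
rewrite -sqrtr_sqr ler_sqrt ?sumr_ge0 // => [|i _]; last exact: sqr_ge0.
by rewrite (bigD1 j) //= lerDl sumr_ge0 // => i _; rewrite sqr_ge0.
Qed.

Lemma enorm_mulmx_le (A : 'M[R]_d) u : enorm (u *m A) <= mxnorm2 A^T * enorm u.
Proof.
set E := [set enorm (v *m A^T^T) | v in [set v : 'rV[R]_d | enorm v <= 1]].
have E_ub : has_ubound E.
  exists (Num.sqrt (\sum_(j < d) (\sum_(i < d) `|A i j|) ^+ 2)).
  move=> _ [v /= v_le1 <-]; rewrite trmxK ler_sqrt; last first.
    by apply: sumr_ge0 => j _; apply: sqr_ge0.
  apply: ler_sum => j _; rewrite -real_normK ?num_real //.
  have col_ge0 : 0 <= \sum_(i < d) `|A i j| by apply: sumr_ge0 => i _.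
  rewrite ler_sqr ?nnegrE //.
  rewrite mxE; apply: le_trans (ler_norm_sum _ _ _) _; apply: ler_sum => i _.
  by rewrite normrM ler_piMl // (le_trans (coord_le_enorm v i)).
have [u0 | u_neq0] := eqVneq (enorm u) 0.
  by rewrite (enorm_eq0 u0) mul0mx -(scale0r 0) enormZ normr0 !mul0r mulr0.
have u_gt0 : 0 < enorm u by rewrite lt_def u_neq0 enorm_ge0.
have : E (enorm ((enorm u)^-1 *: u *m A)).
  exists ((enorm u)^-1 *: u); last by rewrite trmxK.
  by rewrite /= enormZ ger0_norm ?invr_ge0 ?enorm_ge0 // mulVf.
move=> /(ub_le_sup E_ub); rewrite -/(mxnorm2 A^T).
by rewrite -scalemxAl enormZ ger0_norm ?invr_ge0 ?enorm_ge0 // ler_pdivrMl // mulrC.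
Qed.

End EuclideanSpace.

Lemma ler_of_sqr_le_mul (R : realDomainType) (a b : R) :
  0 <= b -> a ^+ 2 <= b * a -> a <= b.
Proof. by move=> b_ge0 ab; nra. Qed.

Section DirectionalDerivatives.
Variables (R : realType) (V : normedModType R).

Lemma is_derive_ge0_at_min (G : V -> R) x v dGv :
  is_derive x v G dGv -> (forall y, G x <= G y) -> 0 <= dGv.
Proof.
move=> [dG <-] G_min.
rewrite /derive (cvg_at_rightE _ _ dG).
apply: limr_ge.
  apply/cvg_ex; eexists => A /dG /nbhs_ballP [_ /posnumP[e] xe_A].
  by exists e%:num => //= y xe_y /gt_eqF/negbT/xe_A; exact.
near=> h; change (0 <= h^-1 * (G (h *: v + x) - G x)).
apply: mulr_ge0; last by rewrite subr_ge0.
by rewrite invr_ge0; apply: ltW; near: h; exists 1 => /=.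
Unshelve. all: by end_near. Qed.

Lemma is_derive_coord m n (F : V -> 'M[R]_(m, n)) x v L i j :
  is_derive x v F L -> is_derive x v (fun y => F y i j) (L i j).
Proof.
move=> [dF <-].
set q := fun h : R => h^-1 *: ((F \o shift x) (h *: v) - F x).
have E : (fun h : R => h^-1 *: (((fun y => F y i j) \o shift x) (h *: v) - F x i j))
    = (fun M : 'M[R]_(m, n) => M i j) \o q.
  by apply/funext => h; rewrite /q /= !mxE.
have q_cvg : (fun M : 'M[R]_(m, n) => M i j) \o q @ 0^' --> 'D_v F x i j.
  exact: cvg_comp dF (@coord_continuous R m n i j _).
split; rewrite /derivable /derive E; first by apply/cvg_ex; exists ('D_v F x i j).
exact: cvg_lim.
Qed.

Lemma is_derive_dotp d (F : V -> 'rV[R]_d) x v L w :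
  is_derive x v F L -> is_derive x v (fun y => dotp w (F y)) (dotp w L).
Proof.
move=> dF; have := is_derive_sum (fun j => is_deriveZ (w 0 j) (is_derive_coord 0 j dF)).
have -> : \sum_(j < d) w 0 j \*: (fun y => F y 0 j) = (fun y => dotp w (F y)).
  by apply/funext => y; rewrite fct_sumE.
done.
Qed.

Lemma is_derive_enorm_sqr d (F : V -> 'rV[R]_d) x v L :
  is_derive x v F L -> is_derive x v (fun y => enorm (F y) ^+ 2) (2 * dotp (F x) L).
Proof.
move=> dF.
have := is_derive_sum (fun j => is_deriveM (is_derive_coord 0 j dF) (is_derive_coord 0 j dF)).
have -> : \sum_(j < d) ((fun y => F y 0 j) * (fun y => F y 0 j)) = (fun y => enorm (F y) ^+ 2).
  by apply/funext => y; rewrite fct_sumE enorm_sqr.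
have -> // : \sum_(j < d) (F x 0 j *: L 0 j + F x 0 j *: L 0 j) = 2 * dotp (F x) L.
by rewrite /dotp mulr_sumr; apply: eq_bigr => j _; rewrite mulr2n mulrDl mul1r.
Qed.

Lemma is_derive_coupling d (Q : V -> 'rV[R]_d) x v DQ (l : 'rV[R]_d) (r : R) :
  is_derive x v Q DQ ->
  is_derive x v (fun y => dotp l (Q y) + r / 2 * enorm (Q y) ^+ 2)
    (dotp l DQ + r * dotp (Q x) DQ).
Proof.
move=> dQ; apply: is_derive_eq.
  exact: (is_deriveD (is_derive_dotp l dQ) (is_deriveZ (r / 2) (is_derive_enorm_sqr dQ))).
by congr (_ + _); rewrite [LHS]mulrA divfK ?pnatr_eq0.
Qed.

End DirectionalDerivatives.

Section Differentiable.
Variables (R : realType) (d : nat).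

Lemma is_derive_grad (g : 'rV[R]_d -> R) x v :
  differentiable g x -> is_derive x v g (dotp (grad g x) v).
Proof.
move=> dg; split; first exact: diff_derivable.
rewrite deriveE // {1}(row_sum_delta v) linear_sum /dotp.
by apply: eq_bigr => j _; rewrite linearZ /= mxE mulrC.
Qed.

Lemma is_derive_jacobian (F : 'rV[R]_d -> 'rV[R]_d) x v :
  differentiable F x -> is_derive x v F (v *m 'J F x).
Proof. by move=> dF; split; [exact: diff_derivable | exact: deriveEjacobian]. Qed.

End Differentiable.

Section AugmentedLagrangian.
Variables (R : realType) (n d : nat) (f : nat -> 'rV[R]_d -> R).
Variables (phi : 'rV[R]_d -> 'rV[R]_d) (rho : nat -> R) (lam : nat -> 'rV[R]_d).

Definition coupling j (p q : 'rV[R]_d) : R :=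
  dotp (lam j) (q - phi p) + rho j / 2 * enorm (q - phi p) ^+ 2.

Lemma auglagB (z z' : nat -> 'rV[R]_d) i : (i < n)%N ->
  (forall j, j != i.+1 -> z j = z' j) ->
  auglag n f phi rho z lam - auglag n f phi rho z' lam =
    (f i.+1 (z i.+1) - f i.+1 (z' i.+1))
    + (coupling i (z i) (z i.+1) - coupling i (z i) (z' i.+1))
    + (if (i.+1 < n)%N then coupling i.+1 (z i.+1) (z i.+2)
                           - coupling i.+1 (z' i.+1) (z i.+2) else 0).
Proof.
move=> lt_in zz'.
have Ef j : f j (z j) - f j (z' j)
    = if j == i.+1 then f i.+1 (z i.+1) - f i.+1 (z' i.+1) else 0.
  by case: eqP => [-> // | /eqP ne]; rewrite zz' ?subrr.
have Ec j : coupling j (z j) (z j.+1) - coupling j (z' j) (z' j.+1)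
    = (if j == i then coupling i (z i) (z i.+1) - coupling i (z i) (z' i.+1) else 0)
    + (if j == i.+1 then coupling i.+1 (z i.+1) (z i.+2)
                         - coupling i.+1 (z' i.+1) (z i.+2) else 0).
  have [-> | ne_ji] := eqVneq j i.
    by rewrite -(zz' i (negbT (ltn_eqF (ltnSn i)))) ltn_eqF ?addr0.
  have [-> | ne_ji1] := eqVneq j i.+1.
    by rewrite (zz' i.+2 (negbT (gtn_eqF (ltnSn i.+1)))) add0r.
  by rewrite !zz' ?subrr ?addr0 ?eqSS.
rewrite /auglag opprD addrACA -!sumrB.
rewrite (eq_bigr _ (fun j _ => Ef j)) (eq_bigr _ (fun j _ => Ec j)) big_split /=.
by rewrite -!big_mkcond !big_nat1_eq /= ltnS lt_in addrA.
Qed.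

End AugmentedLagrangian.

Section ProximalADMMStep.
Variables (R : realType) (n d : nat) (f : nat -> 'rV[R]_d -> R).
Variables (phi : 'rV[R]_d -> 'rV[R]_d) (rho eta : nat -> R).
Variables (x lam : nat -> nat -> 'rV[R]_d).
Hypothesis admm : prox_admm n f phi rho eta x lam.
Variables (k i : nat).
Hypothesis lt_in : (i < n)%N.

(* The x_(i+1)-subproblem of the proximal ADMM, up to terms independent of y. *)
Definition block_objective (y : 'rV[R]_d) : R :=
  f i.+1 y + coupling phi rho (lam k) i (x k.+1 i) y
  + (if (i.+1 < n)%N then coupling phi rho (lam k) i.+1 y (x k i.+2) else 0)
  + 1 / (2 * eta i.+1) * enorm (y - x k i.+1) ^+ 2.

Lemma block_objective_min y : block_objective (x k.+1 i.+1) <= block_objective y.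
Proof.
have := admm.1 k i.+1 lt_in y.
set z := gs_point _ _ _ (x k.+1 i.+1); set z' := gs_point _ _ _ y.
have zz' j : j != i.+1 -> z j = z' j by move=> /negbTE ne; rewrite /z /z' /gs_point ne.
have := auglagB f phi rho (lam k) lt_in zz'.
rewrite /z /z' /gs_point ltnSn ltnn eqxx (leq_gtF (leqnSn i.+1)) (gtn_eqF (ltnSn i.+1)).
by rewrite /block_objective; case: ifP => _; lra.
Qed.

Lemma block_objective_first_order :
  differentiable (f i.+1) (x k.+1 i.+1) -> differentiable phi (x k.+1 i.+1) ->
  dotp (lam k.+1 i) (lam k.+1 i) <=
    - dotp (grad (f i.+1) (x k.+1 i.+1)) (lam k.+1 i)
    - (eta i.+1)^-1 * dotp (x k.+1 i.+1 - x k i.+1) (lam k.+1 i)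
    + (if (i.+1 < n)%N then
         dotp (lam k.+1 i.+1 - rho i.+1 *: (x k.+1 i.+2 - x k i.+2))
              (lam k.+1 i *m 'J phi (x k.+1 i.+1))
       else 0).
Proof.
move=> df dphi; set L := lam k.+1 i; set xs := x k.+1 i.+1; set J := 'J phi xs.
have dxs : is_derive xs (- L) id (- L) := is_derive_id xs (- L).
have dF : is_derive xs (- L) (f i.+1) (- dotp (grad (f i.+1) xs) L).
  by apply: is_derive_eq (is_derive_grad _ df) _; rewrite dotpNr.
have eL : dotp L L = dotp (lam k i) L + rho i * dotp (xs - phi (x k.+1 i)) L.
  by rewrite {1}/L (admm.2 k i lt_in) dotpDl dotpZl.
have dC1 : is_derive xs (- L) (coupling phi rho (lam k) i (x k.+1 i)) (- dotp L L).
  apply: is_derive_eq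
    (is_derive_coupling _ _ (is_deriveB dxs (is_derive_cst (phi (x k.+1 i)) _ _))) _.
  by rewrite eL subr0 !dotpNr mulrN opprD.
have dC2 : is_derive xs (- L)
    (fun y => if (i.+1 < n)%N then coupling phi rho (lam k) i.+1 y (x k i.+2) else 0)
    (if (i.+1 < n)%N then
       dotp (lam k.+1 i.+1 - rho i.+1 *: (x k.+1 i.+2 - x k i.+2)) (L *m J)
     else 0).
  case: ifP => [lt_i1n | _]; last exact: is_derive_cst.
  rewrite (admm.2 k i.+1 lt_i1n) -addrA -scalerBr.
  apply: is_derive_eq
    (is_derive_coupling _ _ (is_deriveB (is_derive_cst _ _ _) (is_derive_jacobian _ dphi))) _.
  have -> : x k.+1 i.+2 - phi xs - (x k.+1 i.+2 - x k i.+2) = x k i.+2 - phi xs.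
    by rewrite opprB addrC addrA subrK.
  by rewrite [in RHS]dotpDl [in RHS]dotpZl sub0r mulNmx opprK.
have dP : is_derive xs (- L) (fun y => 1 / (2 * eta i.+1) * enorm (y - x k i.+1) ^+ 2)
    (- ((eta i.+1)^-1 * dotp (xs - x k i.+1) L)).
  apply: is_derive_eq (is_deriveZ _ (is_derive_enorm_sqr
    (is_deriveB dxs (is_derive_cst (x k i.+1) _ _)))) _.
  rewrite /= subr0 dotpNr mul1r invfM; set e := (eta i.+1)^-1.
  change (2^-1 * e * (2 * - dotp (xs - x k i.+1) L) = - (e * dotp (xs - x k i.+1) L)).
  by field.
have dG : is_derive xs (- L) block_objective _ :=
  is_deriveD (is_deriveD (is_deriveD dF dC1) dC2) dP.
have := is_derive_ge0_at_min dG block_objective_min.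
lra.
Qed.

Lemma multiplier_norm_step (Mf Mphi : R) :
  differentiable (f i.+1) (x k.+1 i.+1) -> differentiable phi (x k.+1 i.+1) ->
  enorm (grad (f i.+1) (x k.+1 i.+1)) <= Mf ->
  mxnorm2 (Jac phi (x k.+1 i.+1)) <= Mphi -> 0 <= Mphi ->
  0 < eta i.+1 -> ((i.+1 < n)%N -> 0 <= rho i.+1) ->
  enorm (lam k.+1 i) <= Mf + enorm (x k.+1 i.+1 - x k i.+1) / eta i.+1
    + (if (i.+1 < n)%N then
         Mphi * (enorm (lam k.+1 i.+1) + rho i.+1 * enorm (x k.+1 i.+2 - x k i.+2))
       else 0).
Proof.
move=> df dphi g_le J_le Mphi_ge0 eta_gt0 rho_ge0.
have := block_objective_first_order df dphi; rewrite -enorm_sqr.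
set L := lam k.+1 i; set N := enorm L; set Dx := x k.+1 i.+1 - x k i.+1.
have N_ge0 : 0 <= N := enorm_ge0 L.
have Mf_ge0 : 0 <= Mf := le_trans (enorm_ge0 _) g_le.
have grad_term : - dotp (grad (f i.+1) (x k.+1 i.+1)) L <= Mf * N.
  rewrite -dotpNl (le_trans (dotp_le_enorm _ _)) // enormN ler_wpM2r //.
have prox_term : - ((eta i.+1)^-1 * dotp Dx L) <= enorm Dx / eta i.+1 * N.
  have eta_inv_ge0 : 0 <= (eta i.+1)^-1 by rewrite invr_ge0 ltW.
  rewrite -mulrN -dotpNl mulrAC mulrC ler_wpM2r //.
  by rewrite (le_trans (dotp_le_enorm _ _)) // enormN.
have Dx_ge0 : 0 <= enorm Dx / eta i.+1 by rewrite divr_ge0 ?enorm_ge0 ?ltW.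
case: ifP => lt_i1n fo; last first.
  by apply: ler_of_sqr_le_mul; lra.
set u := lam k.+1 i.+1 - _ in fo.
set C := enorm (lam k.+1 i.+1) + _.
have C_ge0 : 0 <= C by rewrite addr_ge0 ?mulr_ge0 ?enorm_ge0 ?rho_ge0.
have u_le : enorm u <= C.
  by rewrite (le_trans (enormD _ _)) // enormN enormZ ger0_norm ?rho_ge0.
have LJ_le : enorm (L *m 'J phi (x k.+1 i.+1)) <= Mphi * N.
  exact: le_trans (enorm_mulmx_le _ _) (ler_wpM2r N_ge0 J_le).
have coupling_term : dotp u (L *m 'J phi (x k.+1 i.+1)) <= Mphi * C * N.
  rewrite (le_trans (dotp_le_enorm _ _)) // -mulrA mulrCA.
  exact: ler_pM (enorm_ge0 _) (enorm_ge0 _) u_le LJ_le.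
have MphiC_ge0 : 0 <= Mphi * C by rewrite mulr_ge0.
by apply: ler_of_sqr_le_mul; rewrite ?mulrA; lra.
Qed.

End ProximalADMMStep.

Lemma le_backward_sum (R : realDomainType) (M : R) (a c : nat -> R) (n : nat) :
  0 <= M ->
  (forall i, (i < n)%N -> a i <= c i + (if (i.+1 < n)%N then M * a i.+1 else 0)) ->
  forall i, (i < n)%N -> a i <= \sum_(i <= j < n) M ^+ (j - i) * c j.
Proof.
move=> M_ge0 a_le i; move Em : (n - i)%N => m; elim: m i Em => [|m IH] i Em lt_in.
  by move/eqP: Em; rewrite subn_eq0 leqNgt lt_in.
rewrite big_ltn // subnn expr0 mul1r (le_trans (a_le i lt_in)) // lerD2l.
have -> : \sum_(i.+1 <= j < n) M ^+ (j - i) * c j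
    = M * \sum_(i.+1 <= j < n) M ^+ (j - i.+1) * c j.
  rewrite mulr_sumr !big_nat; apply: eq_bigr => j /andP [lt_ij _].
  by rewrite mulrA -exprS subnSK.
case: ifP => lt_i1n; last by rewrite big_geq ?mulr0 // leqNgt lt_i1n.
by rewrite ler_wpM2l // IH // subnS Em.
Qed.

Lemma backward_sumE (R : comUnitRingType) (M Mf : R) (rho eta e : nat -> R) (n i : nat) :
  (i < n)%N ->
  \sum_(i <= j < n) M ^+ (j - i) *
      (Mf + e j.+1 / eta j.+1 + (if (j.+1 < n)%N then M * rho j.+1 * e j.+2 else 0))
  = (\sum_(0 <= l < n - i) M ^+ l) * Mf
    + \sum_(i <= j < n.-1) rho j.+1 * M ^+ (j.+1 - i) * e j.+2
    + \sum_(i <= j < n) M ^+ (j - i) / eta j.+1 * e j.+1.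
Proof.
move=> lt_in.
have sumMf : \sum_(i <= j < n) M ^+ (j - i) * Mf = (\sum_(0 <= l < n - i) M ^+ l) * Mf.
  by rewrite mulr_suml -{1}(add0n i) big_addn; apply: eq_bigr => l _; rewrite addnK.
have sum_eta : \sum_(i <= j < n) M ^+ (j - i) * (e j.+1 / eta j.+1)
    = \sum_(i <= j < n) M ^+ (j - i) / eta j.+1 * e j.+1.
  by apply: eq_bigr => j _; rewrite mulrA mulrAC.
have sum_rho : \sum_(i <= j < n) M ^+ (j - i) *
      (if (j.+1 < n)%N then M * rho j.+1 * e j.+2 else 0)
    = \sum_(i <= j < n.-1) rho j.+1 * M ^+ (j.+1 - i) * e j.+2.
  have n_eq : n = n.-1.+1 by rewrite prednK // (leq_ltn_trans _ lt_in).
  rewrite [in LHS]n_eq big_nat_recr ?ltnn ?mulr0 ?addr0 -?n_eq /=; last by rewrite -ltnS -n_eq.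
  rewrite addr0 !big_nat; apply: eq_bigr => j /andP [le_ij lt_jn].
  by rewrite -ltn_predRL lt_jn subSn // exprS; ring.
rewrite -sumMf -sum_eta -sum_rho -!big_split /=.
by apply: eq_bigr => j _; rewrite !mulrDr addrAC.
Qed.

Lemma row_tup (R : realType) n d (x : nat -> 'rV[R]_d) (j : 'I_n.+1) :
  row j (tup n x) = x j.
Proof. by apply/rowP => c; rewrite !mxE. Qed.

Unset Implicit Arguments.

Theorem lemma1 (R : realType) (n d : nat) (hn : (1 <= n)%N) (hd : (1 <= d)%N)
  (f : nat -> 'rV[R]_d -> R) (phi : 'rV[R]_d -> 'rV[R]_d)
  (hf : forall i, (i <= n)%N -> C1_scalar (f i)) (hphi : C1_map phi)
  (rho eta : nat -> R)
  (hrho : forall i, (i < n)%N -> 0 < rho i)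
  (heta : forall i, (i <= n)%N -> 0 < eta i)
  (x lam : nat -> nat -> 'rV[R]_d)
  (hadmm : prox_admm n f phi rho eta x lam)
  (S : set 'M[R]_(n.+1, d)) (hS : compact S)
  (Mf Lf Cphi Mphi Lphi : R) (hA2 : A2 f phi S Mf Lf Cphi Mphi Lphi)
  (k : nat) (hk : S (tup n (x k.+1))) :
  forall i, (i < n)%N ->
    enorm (lam k.+1 i) <=
      (\sum_(0 <= l < n - i) Mphi ^+ l) * Mf
      + \sum_(i <= j < n.-1)
          rho j.+1 * Mphi ^+ (j.+1 - i) * enorm (x k.+1 j.+2 - x k j.+2)
      + \sum_(i <= j < n)
          Mphi ^+ (j - i) / eta j.+1 * enorm (x k.+1 j.+1 - x k j.+1).
Proof.
case: hA2 => _ [_ [_ [Mphi_gt0 [_ bounds]]]].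
set e := fun j => enorm (x k.+1 j - x k j).
have step j : (j < n)%N -> enorm (lam k.+1 j) <=
    Mf + e j.+1 / eta j.+1 + (if (j.+1 < n)%N then Mphi * rho j.+1 * e j.+2 else 0)
    + (if (j.+1 < n)%N then Mphi * enorm (lam k.+1 j.+1) else 0).
  move=> lt_jn; have lt_j1 : (j.+1 < n.+1)%N by [].
  have [g_le _ _ J_le _] := bounds _ _ hk hk (Ordinal lt_j1).
  rewrite !row_tup /= in g_le J_le.
  have := multiplier_norm_step hadmm lt_jn ((hf _ lt_jn).1 _) (hphi.1 _) g_le J_le
    (ltW Mphi_gt0) (heta _ lt_jn) (fun lt_j1n => ltW (hrho _ lt_j1n)).
  rewrite -/(e j.+1) -/(e j.+2).
  by case: ifP => _; rewrite ?mulrDr ?mulrA; lra.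
move=> i lt_in; rewrite -(backward_sumE Mphi Mf rho eta e lt_in).
exact: le_backward_sum (ltW Mphi_gt0) step i lt_in.
Qed.
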